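(* Let $r\ge 2$ be an integer, let $\varphi$ be an instance of 2-Clause 3-SAT, and let $G(\varphi)$ be the graph constructed from $\varphi$ and $r$ as described in the context. If $\varphi$ is satisfiable, then $\mathrm{col}_r(G(\varphi)) \leq 6$.
   Context: 2-Clause 3-SAT: given a CNF formula $\varphi$ with clauses $c_1,\dots,c_m$ over variables $x_1,\dots,x_n$ in which each clause contains at most 3 literals and each literal ($x_j$ or $\overline{x}_j$) appears in exactly 2 clauses, decide whether $\varphi$ is satisfiable. It is assumed throughout that no variable appears twice in a single clause and there are no single-literal clauses (so each clause has 2 or 3 literals). An $\ell$-subdivided edge between $a$ and $b$ is an induced path with $\ell$ internal vertices (subdivision vertices) joining $a$ and $b$, whose internal vertices have no other neighbors. Construction of $G(\varphi)$: for each clause $c_i$ create a vertex $u_i$. For each variable $x_j$ create two vertices $v_j,v'_j$ (for literals $x_j$, $\overline{x}_j$) joined by an edge. For each clause $c_i$ containing literal $x_j$ (resp. $\overline{x}_j$), join $u_i$ and $v_j$ (resp. $v'_j$) by an $(r-1)$-subdivided edge. Add a 7-clique on new vertices $w_1,\dots,w_7$. For each clause $c_i$ add edges from $u_i$ to $w_1,\dots,w_4$, and if $c_i$ has only 2 literals also an edge from $u_i$ to $w_5$. For each variable $x_j$ add edges from $v_j$ to $w_2,w_3,w_4$ and from $v'_j$ to $w_5,w_6,w_7$. Coloring numbers: for a graph $G=(V,E)$ and a total order $\sigma$ of $V$, a vertex $v\neq u$ is $r$-reachable from $u$ if $u<_\sigma v$ and there is a $u$–$v$ path of length at most $r$ all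 of whose vertices other than $u,v$ precede $u$ in $\sigma$; $\mathrm{reach}_r(u,G_\sigma)$ is the set of such $v$, and $\mathrm{col}_r(G)=\min_\sigma\max_u|\mathrm{reach}_r(u,G_\sigma)|$ over all total orders $\sigma$ of $V$. *)

From mathcomp Require Import all_boot fingroup perm.
Set Implicit Arguments. Unset Strict Implicit. Unset Printing Implicit Defensive.

(* A total order sigma of A is encoded by a permutation
   o of T: x <_o y  iff  rk o x < rk o y. *)

Definition rk (T : finType) (o : {perm T}) (x : T) : nat := enum_rank (o x).

(* v is r-reachable from u w.r.t. o: u <_o v and there is a u-v path of length
   at most r (k internal vertices, k < r) all of whose internal vertices lie in A
   and precede u. *)
Definition reachb (T : finType) (A : {set T}) (adj : rel T) (r : nat)
    (o : {perm T}) (u v : T) : bool :=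
  [&& u \in A, v \in A, v != u, rk o u < rk o v &
   [exists k : 'I_r, exists p : k.-tuple T,
     [&& path adj u (rcons p v),
         all (fun w => (w \in A) && (rk o w < rk o u)) p &
         uniq (u :: rcons p v)]]].

Definition reach_set (T : finType) (A : {set T}) (adj : rel T) (r : nat)
    (o : {perm T}) (u : T) : {set T} :=
  [set v | reachb A adj r o u v].

Definition wcol_of (T : finType) (A : {set T}) (adj : rel T) (r : nat)
    (o : {perm T}) : nat :=
  \max_(u in A) #|reach_set A adj r o u|.

Definition colnum (T : finType) (A : {set T}) (adj : rel T) (r : nat) : nat :=
  wcol_of A adj r [arg min_(o < (1%g : {perm T})) wcol_of A adj r o].

(* A literal over n variables: (j, true) is x_j, (j, false) is the negation. *)
Definition lit (n : nat) := ('I_n * bool)%type.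

Definition two_clause_3sat (n m : nat) (cl : 'I_m -> seq (lit n)) : Prop :=
  [/\ forall i, 2 <= size (cl i) <= 3,
      forall i, uniq (map fst (cl i)) &
      forall l : lit n, #|[set i | l \in cl i]| = 2].

Definition satisfiable (n m : nat) (cl : 'I_m -> seq (lit n)) : Prop :=
  exists a : 'I_n -> bool, forall i, has (fun l : lit n => a l.1 == l.2) (cl i).

(* Vertices: U i  (inl (inl (inl i))),   V (j,b) (inl (inl (inr (j,b)))),
   subdivision vertex number k (0-based, k < r-1) on the path u_i -> literal l:
   inl (inr (i, l, k)),   clique vertex w_{k+1}: inr k. *)
Definition gvtx (n m r : nat) : finType :=
  ('I_m + lit n + ('I_m * lit n * 'I_r.-1) + 'I_7)%type.

Definition gvset (n m r : nat) (cl : 'I_m -> seq (lit n)) : {set gvtx n m r} :=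
  [set x : gvtx n m r | match x with
                        | inl (inr (i, l, _)) => l \in cl i
                        | _ => true end].

(* one direction of each edge *)
Definition gedge0 (n m r : nat) (cl : 'I_m -> seq (lit n))
    (x y : gvtx n m r) : bool :=
  match x, y with
  | inl (inl (inl i)), inl (inr (i', l, k)) =>
      [&& i == i', l \in cl i & val k == 0]
  | inl (inr (i, l, k)), inl (inr (i', l', k')) =>
      [&& i == i', l == l', l \in cl i & val k' == (val k).+1]
  | inl (inr (i, l, k)), inl (inl (inr l')) =>
      [&& l == l', l \in cl i & (val k).+1 == r.-1]
  (* direct edge when r - 1 = 0 (not used since r >= 2) *)
  | inl (inl (inl i)), inl (inl (inr l)) => (l \in cl i) && (r.-1 == 0)
  | inl (inl (inr (j, true))), inl (inl (inr (j', false))) => j == j'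
  | inr a, inr b => a != b
  (* u_i -- w_1..w_4, and w_5 if c_i has 2 literals *)
  | inl (inl (inl i)), inr k =>
      (val k < 4) || ((val k == 4) && (size (cl i) == 2))
  (* v_j -- w_2,w_3,w_4 ;  v'_j -- w_5,w_6,w_7 *)
  | inl (inl (inr (_, b))), inr k =>
      if b then (1 <= val k <= 3) else (4 <= val k <= 6)
  | _, _ => false
  end.

Definition gadj (n m r : nat) (cl : 'I_m -> seq (lit n)) : rel (gvtx n m r) :=
  fun x y => gedge0 cl x y || gedge0 cl y x.

From mathcomp Require Import all_boot fingroup perm.
From mathcomp Require Import zify.
Set Implicit Arguments. Unset Strict Implicit. Unset Printing Implicit Defensive.

(* Fix a satisfying assignment and order the vertices by [key]: subdivision
   vertices by their distance from the clause end of their path, then the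
   vertices of true literals, the clause vertices, the vertices of false
   literals, and the clique last (ties broken arbitrarily).  A path witnessing
   weak reachability from u runs through vertices preceding u, which confines
   it.  From a subdivision vertex it stays on its own path and reaches at most
   three vertices.  From a true literal it runs along its subdivided edges and
   reaches its two clauses, its negation and three clique vertices.  From a
   false literal it may step to the (true, hence earlier) negation; a clause
   is at distance at least r, so it could only be the endpoint, but clauses
   precede false literals.  Hence only the six clique vertices adjacent to the
   pair are reached.
   From a clause it reaches its 4 or 5 clique neighbours and its false
   literals, of which a satisfied clause with 2 or 3 literals has at most 1 or
   2. *)

Ltac absurd_lia := move=> /=; intros; exfalso; lia.

Lemma exists_perm_rk_mono (T : finType) (f : T -> nat) :
  exists o : {perm T}, forall x y, f x < f y -> rk o x < rk o y.
Proof.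
pose leT := relpre f leq.
pose s := sort leT (enum T).
have s_all x : x \in s by rewrite mem_sort mem_enum.
have index_lt x : index x s < #|T| by rewrite cardE -(size_sort leT) index_mem.
pose h x := enum_val (Ordinal (index_lt x)).
have h_inj : injective h.
  by move=> x y /enum_val_inj [] /(index_inj x (s_all x) (s_all y)).
exists (perm h_inj) => x y lt_xy; rewrite /rk !permE !enum_valK /=.
rewrite ltnNge; apply: contraL lt_xy => le_yx; rewrite -leqNgt.
have leT_tr : transitive leT by move=> ? ? ?; apply: leq_trans.
have leT_refl : reflexive leT by move=> ?; apply: leqnn.
have s_sorted : sorted leT s by apply: sort_sorted => ? ?; apply: leq_total.
exact: (sorted_leq_index leT_tr leT_refl s_sorted _ _ (s_all y) (s_all x)).
Qed.

Lemma colnum_le_wcol (T : finType) (A : {set T}) (adj : rel T) (r : nat)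
    (o : {perm T}) :
  colnum A adj r <= wcol_of A adj r o.
Proof. by rewrite /colnum; case: arg_minnP => // o' _; apply. Qed.

Lemma reachb_inv (T : finType) (A : {set T}) (adj : rel T) (r : nat)
    (o : {perm T}) (u v : T) (I : nat -> T -> Prop) :
  I 0 u ->
  (forall t x y, t.+1 < r -> I t x -> adj x y -> rk o y < rk o u -> I t.+1 y) ->
  reachb A adj r o u v ->
  [/\ v != u, rk o u < rk o v & exists t x, I t x /\ adj x v].
Proof.
move=> I0 I_step /and5P[_ _ vu lt_uv /existsP[k /existsP[p /and3P[u_p p_early _]]]].
split=> //.
suff walk q t x : I t x -> path adj x (rcons q v) ->
    all (fun w => rk o w < rk o u) q -> t + size q < r ->
    exists t x, I t x /\ adj x v.
  apply: (walk p 0 u I0 u_p); last by rewrite size_tuple ltn_ord.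
  by apply: sub_all p_early => w /andP[].
elim: q t x => [|y q IH] t x It /=; first by rewrite andbT => xv _ _; exists t, x.
case/andP=> xy y_q /andP[y_early q_early] lt_r.
apply: (IH t.+1 y) => //; last by rewrite addSnnS.
by apply: I_step xy y_early => //; lia.
Qed.

Lemma card_le_size (T : finType) (X : {set T}) (s : seq T) :
  {subset X <= s} -> #|X| <= size s.
Proof. by move=> Xs; apply: leq_trans (card_size s); apply/subset_leq_card/subsetP. Qed.

Definition neg_lit (n : nat) (l : lit n) : lit n := (l.1, ~~ l.2).

Lemma neg_litK n : involutive (@neg_lit n).
Proof. by case=> j b; rewrite /neg_lit /= negbK. Qed.

Section Graph.
Variables (n m r' : nat) (cl : 'I_m -> seq (lit n)).
Local Notation r := r'.+2.
Local Notation T := (gvtx n m r).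
Local Notation A := (@gvset n m r cl).
Local Notation adj := (@gadj n m r cl).
Local Notation cvtx i := (inl (inl (inl i)) : T).
Local Notation lvtx l := (inl (inl (inr l)) : T).
Local Notation svtx i l k := (inl (inr (i, l, k)) : T).
Local Notation wvtx w := (inr w : T).

Definition wvtxs (s : seq nat) : seq T := [seq wvtx (inord k) | k <- s].

Lemma wvtx_in_wvtxs (s : seq nat) (w : 'I_7) : val w \in s -> wvtx w \in wvtxs s.
Proof. by move=> ws; rewrite -[w]inord_val; apply: map_f. Qed.

Definition lit_wnbrs (b : bool) : seq T := wvtxs (iota (if b then 1 else 4) 3).

Definition clause_wnbrs (i : 'I_m) : seq T :=
  wvtxs (iota 0 (4 + (size (cl i) == 2))).

Lemma size_lit_wnbrs b : size (lit_wnbrs b) = 3.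
Proof. by rewrite size_map size_iota. Qed.

Lemma size_clause_wnbrs i : size (clause_wnbrs i) = 4 + (size (cl i) == 2).
Proof. by rewrite size_map size_iota. Qed.

Lemma gadj_svtx i l (j : 'I_r'.+1) y : adj (svtx i l j) y ->
  [\/ y = cvtx i /\ j = 0 :> nat, y = lvtx l /\ j = r' :> nat
    | exists j' : 'I_r'.+1, y = svtx i l j' /\ (j'.+1 = j \/ j.+1 = j')].
Proof.
case: y => [[[i'|[j' b']]|[[i' [j' b']] k']]|w]; rewrite /gadj /=.
- by case/and3P => /eqP-> _ /eqP j0; constructor 1.
- by rewrite if_same orbF => /and3P[/eqP <- _ /eqP[jr]]; constructor 2.
- by case/orP => /and4P[/eqP<- /eqP<- _ /eqP jk];
    constructor 3; exists k'; rewrite jk; auto.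
- by [].
Qed.

Lemma gadj_lvtx l y : adj (lvtx l) y ->
  [\/ y = lvtx (neg_lit l),
      exists i (j : 'I_r'.+1), [/\ y = svtx i l j, l \in cl i & j = r' :> nat]
    | exists w, y = wvtx w /\ y \in lit_wnbrs l.2].
Proof.
case: l => j b; case: y => [[[i'|[j' b']]|[[i' [j' b']] k']]|w]; rewrite /gadj /=.
- by rewrite andbF if_same.
- by case: b; case: b' => //=; rewrite ?orbF => /eqP ->; constructor 1.
- by rewrite if_same => /and3P[/eqP[<- <-] li /eqP[jr]]; constructor 2; exists i', k'.
- rewrite orbF => wb; constructor 3; exists w; split=> //; apply: wvtx_in_wvtxs.
  by rewrite mem_iota; case: b wb => /=; lia.
Qed.

Lemma gadj_cvtx i y : adj (cvtx i) y ->
  (exists l (j : 'I_r'.+1), [/\ y = svtx i l j, l \in cl i & j = 0 :> nat]) \/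
  (exists w, y = wvtx w /\ y \in clause_wnbrs i).
Proof.
case: y => [[[i'|[j' b']]|[[i' [j' b']] k']]|w]; rewrite /gadj /=.
- by [].
- by rewrite andbF if_same.
- by rewrite orbF => /and3P[/eqP <- li /eqP j0]; left; exists (j', b'), k'.
- rewrite orbF => wi; right; exists w; split=> //; apply: wvtx_in_wvtxs.
  by rewrite mem_iota; case: (size _ == 2) wi => /=; lia.
Qed.

Section Ordering.
Variable a : 'I_n -> bool.

Definition lit_true (l : lit n) : bool := a l.1 == l.2.

Lemma lit_true_neg l : lit_true (neg_lit l) = ~~ lit_true l.
Proof. by rewrite /lit_true /=; case: (a _); case: l.2. Qed.

Definition key (x : T) : nat :=
  match x with
  | inl (inl (inl _)) => r.+1
  | inl (inl (inr l)) => if lit_true l then r else r.+2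
  | inl (inr (_, _, k)) => k
  | inr _ => r.+3
  end.

Variable o : {perm T}.
Hypothesis rk_key : forall x y, key x < key y -> rk o x < rk o y.

Lemma rk_key_le x y : rk o x < rk o y -> key x <= key y.
Proof.
by move=> lt_xy; rewrite leqNgt; apply/negP => /rk_key /ltnW; rewrite leqNgt lt_xy.
Qed.

Local Notation reach u := (reach_set A adj r o u).

Lemma card_reach_wvtx w : #|reach (wvtx w)| <= 6.
Proof.
apply: (@leq_trans (size [seq wvtx x | x <- enum (predC1 w)])); last first.
  by rewrite size_map -cardE cardC1 card_ord.
apply: card_le_size => v; rewrite inE => /and5P[_ _ vw /rk_key_le + _].
case: v vw => [[[i|l]|[[i l] k]]|x] /= vw.
- by absurd_lia.
- by case: lit_true; absurd_lia.
- by have /= := ltn_ord k; absurd_lia.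
- by move=> _; apply: map_f; rewrite mem_enum inE; apply: contra vw => /eqP ->.
Qed.

Lemma card_reach_svtx i l (k : 'I_r'.+1) : #|reach (svtx i l k)| <= 3.
Proof.
apply: (card_le_size (s := [:: cvtx i; lvtx l; svtx i l (inord k.+1)])) => v.
pose I : nat -> T -> Prop := fun _ x => exists2 j : 'I_r'.+1, x = svtx i l j & j <= k.
rewrite inE; case/(reachb_inv (I := I)).
- by exists k.
- move=> t x y _ [j -> _] /gadj_svtx[[-> _]|[-> _]|[j' [-> _]]] /rk_key_le /=.
  + by have := ltn_ord k; absurd_lia.
  + by have := ltn_ord k; case: lit_true; absurd_lia.
  + by exists j'.
move=> vk lt_kv [t [x [[j -> jk] xv]]]; move: vk (rk_key_le lt_kv).
case/gadj_svtx: xv => [[-> _]|[-> _]|[j' [-> jj']]].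
- by rewrite mem_head.
- by rewrite !in_cons eqxx orbT.
move=> vk /= key_le.
have j'k : j' != k :> nat by apply: contraNneq vk => /val_inj ->.
have -> : j' = inord k.+1 by apply: val_inj; rewrite /= inordK; have := ltn_ord j'; lia.
by rewrite !in_cons eqxx !orbT.
Qed.

Lemma card_reach_true_lvtx l : lit_true l -> #|[set i | l \in cl i]| <= 2 ->
  #|reach (lvtx l)| <= 6.
Proof.
move=> l_true occ.
pose s := [seq cvtx i | i <- enum [set i | l \in cl i]] ++ [:: lvtx (neg_lit l)] ++
          lit_wnbrs l.2.
apply: (@leq_trans (size s)); last first.
  by rewrite /s !size_cat size_map size_lit_wnbrs -cardE (leq_add occ).
apply: card_le_size => v; rewrite inE.
pose I : nat -> T -> Prop :=
  fun _ x => x = lvtx l \/ exists i (j : 'I_r'.+1), x = svtx i l j /\ l \in cl i.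
case/(reachb_inv (I := I)); first by left.
  move=> t x y _ [->|[i [j [-> li]]]].
  - case/gadj_lvtx=> [->|[i [j [-> li _]]]|[w [-> _]]] /rk_key_le /=.
    + by rewrite lit_true_neg l_true /=; absurd_lia.
    + by right; exists i, j.
    + by rewrite l_true /=; absurd_lia.
  - case/gadj_svtx=> [[-> _]|[-> _]|[j' [-> _]]] /rk_key_le /=.
    + by rewrite l_true /=; absurd_lia.
    + by left.
    + by right; exists i, j'.
move=> vl lt_lv [t [x [Ix xv]]]; move: vl (rk_key_le lt_lv).
case: Ix xv => [->|[i [j [-> li]]]].
- case/gadj_lvtx=> [->|[i [j [-> _ _]]]|[w [-> wl]]] _ /=.
  + by rewrite mem_cat mem_head orbT.
  + by have := ltn_ord j; rewrite l_true /=; absurd_lia.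
  + by rewrite mem_cat in_cons wl !orbT.
- case/gadj_svtx=> [[-> _]|[-> _]|[j' [-> _]]] /=.
  + by rewrite mem_cat map_f // mem_enum inE.
  + by rewrite eqxx.
  + by have := ltn_ord j'; rewrite l_true /=; absurd_lia.
Qed.

Lemma card_reach_false_lvtx l : ~~ lit_true l -> #|reach (lvtx l)| <= 6.
Proof.
move=> /negbTE l_false.
have neg_true : lit_true (neg_lit l) by rewrite lit_true_neg l_false.
apply: (@leq_trans (size (lit_wnbrs l.2 ++ lit_wnbrs (~~ l.2)))); last first.
  by rewrite size_cat !size_lit_wnbrs.
apply: card_le_size => v; rewrite inE.
pose I : nat -> T -> Prop := fun t x =>
  [\/ x = lvtx l, x = lvtx (neg_lit l) /\ 0 < t,
       exists i (j : 'I_r'.+1), x = svtx i l j /\ r' < j + t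
     | exists i (j : 'I_r'.+1), x = svtx i (neg_lit l) j /\ r'.+1 < j + t].
case/(reachb_inv (I := I)); first by constructor 1.
  move=> t x y t_lt [->|[-> t_pos]|[i [j [-> jt]]]|[i [j [-> jt]]]].
  - case/gadj_lvtx=> [->|[i [j [-> _ jr]]]|[w [-> _]]] /rk_key_le /=.
    + by constructor 2.
    + by move=> _; constructor 3; exists i, j; split=> //; lia.
    + by rewrite l_false; absurd_lia.
  - case/gadj_lvtx=> [->|[i [j [-> _ jr]]]|[w [-> _]]] /rk_key_le /=.
    + by rewrite neg_litK; constructor 1.
    + by move=> _; constructor 4; exists i, j; split=> //; lia.
    + by rewrite l_false; absurd_lia.
  - case/gadj_svtx=> [[-> j0]|[-> _]|[j' [-> jj']]] _.
    + by absurd_lia.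
    + by constructor 1.
    + by constructor 3; exists i, j'; split=> //; lia.
  - case/gadj_svtx=> [[-> j0]|[-> _]|[j' [-> jj']]] _.
    + by absurd_lia.
    + by constructor 2.
    + by constructor 4; exists i, j'; split=> //; lia.
move=> vl lt_lv [t [x [Ix xv]]]; move: vl (rk_key_le lt_lv).
case: Ix xv => [->|[-> _]|[i [j [-> _]]]|[i [j [-> _]]]].
- case/gadj_lvtx=> [->|[i [j [-> _ _]]]|[w [-> wl]]] _.
  + by rewrite /= neg_true l_false; absurd_lia.
  + by have := ltn_ord j; rewrite /= l_false; absurd_lia.
  + by rewrite mem_cat wl.
- case/gadj_lvtx=> [->|[i [j [-> _ _]]]|[w [-> wl]]].
  + by rewrite neg_litK eqxx.
  + by have := ltn_ord j; rewrite /= l_false; absurd_lia.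
  + by rewrite mem_cat wl orbT.
- case/gadj_svtx=> [[-> _]|[-> _]|[j' [-> _]]].
  + by rewrite /= l_false; absurd_lia.
  + by rewrite eqxx.
  + by have := ltn_ord j'; rewrite /= l_false; absurd_lia.
- case/gadj_svtx=> [[-> _]|[-> _]|[j' [-> _]]] _.
  + by rewrite /= l_false; absurd_lia.
  + by rewrite /= neg_true l_false; absurd_lia.
  + by have := ltn_ord j'; rewrite /= l_false; absurd_lia.
Qed.

Lemma card_reach_cvtx i : size (cl i) <= 3 -> has lit_true (cl i) ->
  #|reach (cvtx i)| <= 6.
Proof.
move=> cl_size cl_sat.
pose s := clause_wnbrs i ++ [seq lvtx l | l <- filter (predC lit_true) (cl i)].
apply: (@leq_trans (size s)); last first.
  rewrite /s size_cat size_clause_wnbrs size_map size_filter.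
  have := count_predC lit_true (cl i); rewrite has_count in cl_sat.
  set n_false := count (predC _) _.
  by case: eqP => /= [size2|size3]; lia.
apply: card_le_size => v; rewrite inE.
pose I : nat -> T -> Prop := fun t x => (x = cvtx i /\ t = 0) \/
  exists l (j : 'I_r'.+1), [/\ x = svtx i l j, l \in cl i & j < t].
case/(reachb_inv (I := I)); first by left.
  move=> t x y t_lt [[-> ->]|[l [j [-> li jt]]]].
  - case/gadj_cvtx=> [[l [j [-> li j0]]]|[w [-> _]]] /rk_key_le /=.
    + by move=> _; right; exists l, j; rewrite j0.
    + by absurd_lia.
  - case/gadj_svtx=> [[-> _]|[-> jr]|[j' [-> jj']]].
    + by rewrite ltnn.
    + by absurd_lia.
    + by move=> _; right; exists l, j'; split=> //; lia.
move=> vc lt_cv [t [x [Ix xv]]]; move: vc (rk_key_le lt_cv).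
case: Ix xv => [[-> _]|[l [j [-> li _]]]].
- case/gadj_cvtx=> [[l [j [-> _ _]]]|[w [-> wc]]] _.
  + by have := ltn_ord j; absurd_lia.
  + by rewrite mem_cat wc.
- case/gadj_svtx=> [[-> _]|[-> _]|[j' [-> _]]].
  + by rewrite eqxx.
  + case: (boolP (lit_true l)) => [l_true|l_false].
      by rewrite /= l_true; absurd_lia.
    by rewrite mem_cat map_f ?orbT // mem_filter /= l_false.
  + by have := ltn_ord j'; absurd_lia.
Qed.
End Ordering.
End Graph.

Theorem lemma3p14 (r n m : nat) (cl : 'I_m -> seq (lit n)) :
  2 <= r -> two_clause_3sat cl -> satisfiable cl ->
  colnum (@gvset n m r cl) (@gadj n m r cl) r <= 6.
Proof.
case: r => [|[|r']] // _ [cl_size _ lit_occ] [a cl_sat].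
have [o rk_key] := exists_perm_rk_mono (@key n m r' a).
apply: leq_trans (colnum_le_wcol _ _ _ o) _.
apply/bigmax_leqP => -[[[i|l]|[[i l] k]]|w] _.
- by case/andP: (cl_size i) => _ /(card_reach_cvtx rk_key); apply.
- have [l_true|l_false] := boolP (lit_true a l).
  + by apply: (card_reach_true_lvtx rk_key l_true); rewrite lit_occ.
  + exact: (card_reach_false_lvtx cl rk_key l_false).
- exact: leq_trans (card_reach_svtx cl rk_key i l k) _.
- exact: (card_reach_wvtx cl rk_key w).
Qed.
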